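(* In the general DDE setting described in the context, suppose that $F$ maps every subset of $U$ that is bounded with respect to $\|\cdot\|_0$ into a bounded subset of $\mathbb R^N$, and that there exists $K$ such that for every $\phi\in X_+$ there is $T=T(\phi)\ge0$ with $\|x^\phi_t\|_0\le K$ for all $t\ge T$. Then there exists $K'$ such that for every $\phi\in X_+$ there is $t_0=t_0(\phi)\ge0$ with $\|x^\phi_t\|_1\le K'$ for all $t\ge t_0$; i.e. $S_+$ is point dissipative.
   Context: Let $N\in\mathbb N$, $h>0$, $C:=C([-h,0],\mathbb R^N)$ with $\|\phi\|_0:=\max_{\theta\in[-h,0]}|\phi(\theta)|$, $C^1:=C^1([-h,0],\mathbb R^N)$ with $\|\phi\|_1:=\|\phi\|_0+\|\phi'\|_0$; $x_t(s):=x(t+s)$, $s\in[-h,0]$. Let $U\subset C^1$ be open and $F:U\to\mathbb R^N$. Consider $x'(t)=F(x_t)$, $t>0$, $x_0=\phi$; a solution on $[-h,t_* )$ is a $C^1$ map $x$ with $x_0=\phi$, $x_t\in U$ and $x'(t)=F(x_t)$ for $t\in(0,t_* )$. Assume $F$ satisfies (S): $F$ is $C^1$, each $DF(\phi)$ extends to a linear map $D_eF(\phi):C\to\mathbb R^N$ and $(\phi,\chi)\mapsto D_eF(\phi)\chi$ is continuous on $U\times C$. Let $X:=\{\phi\in U:\phi'(0)=F(\phi)\}$; each $\phi\in X$ has a maximal solution $x^\phi$ on $[-h,t_\phi)$ with segments in $X$. Let $U_+\subset U$ be such that $X_+:=X\cap U_+\neq\emptyset$, $x^\phi_t\in X_+$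 for all $\phi\in X_+$, $t\in[0,t_\phi)$; $F$ is (sLb) on $U_+$ (for each $\|\cdot\|_1$-bounded $B\subset U_+$ there is $L_B$ with $|F(\phi)-F(\chi)|\le L_B\|\phi-\chi\|_0$ on $B$); and for every $\phi\in X_+$ the orbit $\{x^\phi_t:t\in[0,t_\phi)\}$ is $\|\cdot\|_1$-bounded with closure in $U$. Under these assumptions $t_\phi=\infty$ for $\phi\in X_+$ and $S_+(t,\phi):=x^\phi_t$ is a continuous semiflow on $X_+$. *)

(* R : realType, R^N := 'rV[R]_N
   with the library (max) norm `|.|.  Segments / initial data are functions
   R -> R^N of which only the restriction to [-h,0] matters. *)
From HB Require Import structures.
From mathcomp Require Import all_boot all_order all_algebra.
From mathcomp Require Import all_classical all_reals all_analysis.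
Set Implicit Arguments. Unset Strict Implicit. Unset Printing Implicit Defensive.
Import Order.TTheory GRing.Theory Num.Theory.
Import numFieldNormedType.Exports.
Local Open Scope classical_set_scope.
Local Open Scope ring_scope.

Section DDE.
Variables (R : realType) (N : nat) (h : R).

Notation V := 'rV[R]_N.
Notation seg := (R -> V).

Definition Ih : set R := [set s | - h <= s <= 0].

Definition norm0 (phi : seg) : R := sup [set `|phi s| | s in Ih].

(* derivative on a subset I of R, one-sided at boundary points of I:
   dphi t is the derivative of phi at t relative to I *)
Definition has_deriv_on (I : set R) (phi : seg) (dphi : seg) : Prop :=
  forall t, I t -> forall eps : R, 0 < eps -> exists2 del : R, 0 < del &
    forall s, I s -> `|s - t| < del ->
      `|phi s - phi t - (s - t) *: dphi t| <= eps * `|s - t|.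

Definition cont_on (I : set R) (phi : seg) : Prop :=
  forall t, I t -> forall eps : R, 0 < eps -> exists2 del : R, 0 < del &
    forall s, I s -> `|s - t| < del -> `|phi s - phi t| < eps.

Definition inC (phi : seg) : Prop := cont_on Ih phi.
Definition inC1 (phi : seg) : Prop :=
  exists2 dphi, has_deriv_on Ih phi dphi & cont_on Ih dphi.

(* the derivative phi' on [-h,0] (chosen; unique on [-h,0] since h > 0) *)
Definition segderiv (phi : seg) : seg :=
  match pselect (exists dphi, has_deriv_on Ih phi dphi) with
  | left e => projT1 (cid e)
  | right _ => fun _ => 0
  end.

Definition norm1 (phi : seg) : R := norm0 phi + norm0 (segderiv phi).

Definition segadd (phi chi : seg) : seg := fun s => phi s + chi s.
Definition segsub (phi chi : seg) : seg := fun s => phi s - chi s.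
Definition segscale (a : R) (phi : seg) : seg := fun s => a *: phi s.

Definition segment (x : seg) (t : R) : seg := fun s => x (t + s).

Definition open_in_C1 (U : set seg) : Prop :=
  U `<=` inC1 /\
  forall phi, U phi -> exists2 del : R, 0 < del &
    forall psi, inC1 psi -> norm1 (segsub psi phi) < del -> U psi.

Definition hypS (U : set seg) (F : seg -> V) : Prop :=
  (* F is C^1 on U (Frechet derivative DF, continuous in operator norm) *)
  (exists DF : seg -> seg -> V,
     (forall phi, U phi ->
        (forall (a : R) chi1 chi2, inC1 chi1 -> inC1 chi2 ->
           DF phi (segadd (segscale a chi1) chi2) = a *: DF phi chi1 + DF phi chi2)
        /\ (exists M : R, forall chi, inC1 chi -> `|DF phi chi| <= M * norm1 chi)
        /\ (forall eps : R, 0 < eps -> exists2 del : R, 0 < del &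
              forall chi, inC1 chi -> norm1 chi < del -> U (segadd phi chi) ->
                `|F (segadd phi chi) - F phi - DF phi chi| <= eps * norm1 chi)
        /\ (forall eps : R, 0 < eps -> exists2 del : R, 0 < del &
              forall psi, U psi -> norm1 (segsub psi phi) < del ->
                forall chi, inC1 chi ->
                  `|DF psi chi - DF phi chi| <= eps * norm1 chi))
     /\
   (* each DF phi extends to a linear map D_eF phi : C -> R^N, and
      (phi,chi) |-> D_eF phi chi is continuous on U x C *)
     exists DeF : seg -> seg -> V,
       (forall phi, U phi ->
          (forall (a : R) chi1 chi2, inC chi1 -> inC chi2 ->
             DeF phi (segadd (segscale a chi1) chi2) = a *: DeF phi chi1 + DeF phi chi2)
          /\ (forall chi, inC1 chi -> DeF phi chi = DF phi chi))
       /\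
       (forall phi chi, U phi -> inC chi ->
          forall eps : R, 0 < eps -> exists2 del : R, 0 < del &
            forall psi om, U psi -> inC om ->
              norm1 (segsub psi phi) < del -> norm0 (segsub om chi) < del ->
              `|DeF psi om - DeF phi chi| < eps)).

Definition Xset (U : set seg) (F : seg -> V) : set seg :=
  [set phi | U phi /\ segderiv phi 0 = F phi].

Definition Isol (ts : \bar R) : set R := [set t | - h <= t /\ (t%:E < ts)%E].

Definition is_solution (U : set seg) (F : seg -> V) (phi : seg)
    (ts : \bar R) (x : seg) : Prop :=
  (0 < ts)%E /\
  (exists2 dx, has_deriv_on (Isol ts) x dx &
     cont_on (Isol ts) dx /\
     forall t, 0 < t -> (t%:E < ts)%E -> dx t = F (segment x t)) /\
  (forall s, Ih s -> x s = phi s) /\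
  (forall t, 0 < t -> (t%:E < ts)%E -> U (segment x t)).

Definition is_max_solution (U : set seg) (F : seg -> V) (phi : seg)
    (ts : \bar R) (x : seg) : Prop :=
  is_solution U F phi ts x /\
  forall ts' y, is_solution U F phi ts' y ->
    (forall t, Isol ts t -> y t = x t) -> (ts' <= ts)%E.

Definition sLb (Up : set seg) (F : seg -> V) : Prop :=
  forall B : set seg, B `<=` Up -> (exists c : R, forall phi, B phi -> norm1 phi <= c) ->
    exists L : R, forall phi chi, B phi -> B chi ->
      `|F phi - F chi| <= L * norm0 (segsub phi chi).

Definition bounded0_to_bounded (U : set seg) (F : seg -> V) : Prop :=
  forall B : set seg, B `<=` U -> (exists c : R, forall phi, B phi -> norm0 phi <= c) ->
    exists M : R, forall phi, B phi -> `|F phi| <= M.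

End DDE.

From HB Require Import structures.
From mathcomp Require Import all_boot all_order all_algebra.
From mathcomp Require Import all_classical all_reals all_analysis.
From mathcomp Require Import ring lra.
Import Order.TTheory GRing.Theory Num.Theory.
Import numFieldNormedType.Exports.
Local Open Scope classical_set_scope.
Local Open Scope ring_scope.

(* Eventually, x_t lies in the ||.||_0-ball of radius K in U, on which F is
   bounded by some M. One delay h later, the whole segment x_t is a piece of
   solution whose derivative theta |-> x'(t + theta) = F(x_{t+theta}) takes
   values in that bound, so ||x_t||_1 <= K + M. *)

Section DelayInterval.
Context {R : realType} {N : nat} {h : R}.
Hypothesis h_gt0 : 0 < h.

Lemma Ih_other_point_near (u del : R) : Ih h u -> 0 < del ->
  exists s, [/\ Ih h s, s != u & `|s - u| < del].
Proof.
move=> /andP[hu u0] del_gt0.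
set m := Num.min del h / 2.
have m_gt0 : 0 < m by rewrite /m divr_gt0 // lt_min del_gt0 h_gt0.
have min_le_del : Num.min del h <= del by rewrite ge_min lexx.
have min_le_h : Num.min del h <= h by rewrite ge_min lexx orbT.
have m_lt_del : m < del by rewrite /m; lra.
have m_le_h2 : m <= h / 2 by rewrite /m; lra.
case: (lerP (- h) (u - m)) => hum.
- exists (u - m); split; first by rewrite /Ih /= hum /=; lra.
  + by apply/eqP; lra.
  + by rewrite addrAC subrr sub0r normrN gtr0_norm.
- exists (u + m); split; first by rewrite /Ih /=; apply/andP; split; lra.
  + by apply/eqP; lra.
  + by rewrite addrAC subrr add0r gtr0_norm.
Qed.

Lemma has_deriv_on_Ih_unique (phi d1 d2 : R -> 'rV[R]_N) u :
  Ih h u -> has_deriv_on (Ih h) phi d1 -> has_deriv_on (Ih h) phi d2 ->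
  d1 u = d2 u.
Proof.
move=> Iu D1 D2.
apply/eqP; rewrite -subr_eq0 -normr_le0.
apply/ler_addgt0Pr => e e_gt0; rewrite add0r.
have e2_gt0 : 0 < e / 2 by rewrite divr_gt0.
have [del1 del1_gt0 H1] := D1 u Iu _ e2_gt0.
have [del2 del2_gt0 H2] := D2 u Iu _ e2_gt0.
have [s [Is s_neq_u]] : exists s, [/\ Ih h s, s != u & `|s - u| < Num.min del1 del2].
  by apply: Ih_other_point_near; rewrite // lt_min del1_gt0 del2_gt0.
rewrite lt_min => /andP[s_del1 s_del2].
have diffE : (s - u) *: (d1 u - d2 u) =
    (phi s - phi u - (s - u) *: d2 u) - (phi s - phi u - (s - u) *: d1 u).
  by rewrite scalerBr opprB [RHS]addrC addrA subrK.
have su_gt0 : 0 < `|s - u| by rewrite normr_gt0 subr_eq0.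
rewrite -(ler_pM2l su_gt0) -normrZ diffE.
apply: (le_trans (ler_normB _ _)).
have -> : `|s - u| * e = e / 2 * `|s - u| + e / 2 * `|s - u|.
  by rewrite -mulrDl -splitr mulrC.
exact: lerD (H2 s Is s_del2) (H1 s Is s_del1).
Qed.

Lemma segderivE {phi dphi : R -> 'rV[R]_N} {s : R} :
  has_deriv_on (Ih h) phi dphi -> Ih h s -> segderiv h phi s = dphi s.
Proof.
move=> Dphi Is; rewrite /segderiv; case: pselect => [ex|nex]; last first.
  by exfalso; apply: nex; exists dphi.
by case: (cid ex) => d Dd /=; exact: has_deriv_on_Ih_unique Dd Dphi.
Qed.

Lemma norm0_le (phi : R -> 'rV[R]_N) (c : R) :
  (forall s, Ih h s -> `|phi s| <= c) -> norm0 h phi <= c.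
Proof.
move=> phi_le; apply: ge_sup; last by move=> _ [s Is <-]; exact: phi_le.
by exists `|phi 0|, 0; rewrite // /Ih /= lexx andbT oppr_le0 ltW.
Qed.

End DelayInterval.

Lemma has_deriv_on_segment {R : realType} {N : nat} {I J : set R}
    {x dx : R -> 'rV[R]_N} {t : R} :
  (forall s, I s -> J (t + s)) -> has_deriv_on J x dx ->
  has_deriv_on I (segment x t) (segment dx t).
Proof.
move=> IJ Dx u Iu eps eps_gt0.
have [del del_gt0 Hdel] := Dx _ (IJ u Iu) eps eps_gt0.
exists del => // s Is.
have shiftE : t + s - (t + u) = s - u by ring.
by have := Hdel _ (IJ s Is); rewrite shiftE.
Qed.

Lemma Isol_shift_Ih {R : realType} {h t : R} {ts : \bar R} :
  0 <= t -> (t%:E < ts)%E -> forall s, Ih h s -> Isol h ts (t + s).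
Proof.
move=> t_ge0 t_lt_ts s /andP[hs s_le0]; split; first lra.
by apply: le_lt_trans t_lt_ts; rewrite lee_fin; lra.
Qed.

Lemma norm0_segderiv_solution_le (R : realType) (N : nat) (h : R)
    (U : set (R -> 'rV[R]_N)) F phi ts x (T M t : R) :
  0 < h -> is_solution h U F phi ts x -> 0 < T ->
  (forall u, T <= u -> (u%:E < ts)%E -> `|F (segment x u)| <= M) ->
  T + h <= t -> (t%:E < ts)%E -> norm0 h (segderiv h (segment x t)) <= M.
Proof.
move=> h_gt0 [_ [[dx Dx [_ dxE]] _]] T_gt0 FM tT t_lt_ts.
have t_ge0 : 0 <= t by lra.
have Dseg := has_deriv_on_segment (Isol_shift_Ih t_ge0 t_lt_ts) Dx.
apply: norm0_le => // s Is.
have [_ ts_lt_ts] := Isol_shift_Ih t_ge0 t_lt_ts s Is.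
have Tts : T <= t + s by case/andP: Is; lra.
by rewrite (segderivE h_gt0 Dseg Is) /segment dxE; [exact: FM|lra|].
Qed.

Theorem lemma5 (R : realType) (N : nat) (h : R) (U Up : set (R -> 'rV[R]_N))
  (F : (R -> 'rV[R]_N) -> 'rV[R]_N) :
  (0 < N)%N -> 0 < h ->
  open_in_C1 h U ->
  hypS h U F ->
  Up `<=` U ->
  (* X_+ := X ∩ U_+ is nonempty *)
  (exists phi, Xset h U F phi /\ Up phi) ->
  (* X_+ is positively invariant under the maximal solutions *)
  (forall phi ts x, Xset h U F phi -> Up phi -> is_max_solution h U F phi ts x ->
     forall t, 0 <= t -> (t%:E < ts)%E ->
       Xset h U F (segment x t) /\ Up (segment x t)) ->
  sLb h Up F ->
  (* orbits of X_+ are ||.||_1-bounded with closure in U *)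
  (forall phi ts x, Xset h U F phi -> Up phi -> is_max_solution h U F phi ts x ->
     (exists c : R, forall t, 0 <= t -> (t%:E < ts)%E -> norm1 h (segment x t) <= c) /\
     (forall psi, inC1 h psi ->
        (forall eps : R, 0 < eps -> exists t, [/\ 0 <= t, (t%:E < ts)%E &
            norm1 h (segsub (segment x t) psi) < eps]) -> U psi)) ->
  (* the additional hypotheses of the lemma *)
  bounded0_to_bounded h U F ->
  (exists K : R, forall phi ts x, Xset h U F phi -> Up phi -> is_max_solution h U F phi ts x ->
     exists2 T : R, 0 <= T &
       forall t, T <= t -> (t%:E < ts)%E -> norm0 h (segment x t) <= K) ->
  (* conclusion: S_+ is point dissipative *)
  exists K' : R, forall phi ts x, Xset h U F phi -> Up phi -> is_max_solution h U F phi ts x ->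
     exists2 t0 : R, 0 <= t0 &
       forall t, t0 <= t -> (t%:E < ts)%E -> norm1 h (segment x t) <= K'.
Proof.
move=> _ h_gt0 _ _ _ _ _ _ _ F_bounded [K HK].
have [M FM] : exists M : R, forall psi, U psi /\ norm0 h psi <= K -> `|F psi| <= M.
  apply: (F_bounded [set psi | U psi /\ norm0 h psi <= K]); first by move=> psi [].
  by exists K => psi [].
exists (K + M) => phi ts x Xphi Upphi xmax.
have [T T_ge0 xK] := HK phi ts x Xphi Upphi xmax.
have [xsol _] := xmax.
have [_ [_ [_ xU]]] := xsol.
(* the equation x' = F(x_u) is only available for u > 0, hence T + 1 *)
have FM_late : forall u, T + 1 <= u -> (u%:E < ts)%E -> `|F (segment x u)| <= M.
  by move=> u Tu u_lt_ts; apply: FM; split; [apply: xU|apply: xK]; rewrite //; lra.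
exists (T + 1 + h) => [|t Tt t_lt_ts]; first lra.
apply: lerD; first by apply: xK => //; lra.
by apply: norm0_segderiv_solution_le xsol _ FM_late Tt t_lt_ts; lra.
Qed.
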